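(* Let $\mathbb F$ be algebraically closed with $\operatorname{char}\mathbb F\ne2$, $a,b,c\in\mathbb F$, $d\in\mathbb N$. The $\Re$-module $R_d(a,b,c)$ is irreducible if and only if both (i) $\operatorname{char}\mathbb F=0$ or $\operatorname{char}\mathbb F>d$, and (ii) none of $a+b+c+1$, $-a+b+c$, $a-b+c$, $a+b-c$ lies in $\{\tfrac d2-i\mid i=1,2,\dots,d\}$.
   Context: The Racah algebra $\Re$ is the unital associative $\mathbb F$-algebra with generators $A,B,C,D$ and relations $[A,B]=[B,C]=[C,A]=2D$ together with the requirement that each of $\alpha:=[A,D]+AC-BA$, $\beta:=[B,D]+BA-CB$, $\gamma:=[C,D]+CB-AC$ is central in $\Re$; $\delta:=A+B+C$. For $a,b,c\in\mathbb F$ and $d\in\mathbb N$ set $\theta_i=(a+\tfrac d2-i)(a+\tfrac d2-i+1)$, $\theta_i^*=(b+\tfrac d2-i)(b+\tfrac d2-i+1)$, $\varphi_i=i(i-d-1)(a+b+c+\tfrac d2-i+2)(a+b-c+\tfrac d2-i+1)$. $R_d(a,b,c)$ denotes the $(d+1)$-dimensional $\Re$-module with a basis $v_0,\dots,v_d$ such that $Av_i=\theta_iv_i+v_{i+1}$ ($v_{d+1}=0$), $Bv_i=\theta_i^*v_i+\varphi_iv_{i-1}$ ($v_{-1}=0$), and $\alpha,\beta,\delta$ act as the scalars $(c-b)(c+b+1)(a-\tfrac d2)(a+\tfrac d2+1)$, $(a-c)(a+c+1)(b-\tfrac d2)(b+\tfrac d2+1)$, $\tfrac d2(\tfrac d2+1)+a(a+1)+b(b+1)+c(c+1)$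 respectively (exists, unique up to isomorphism). *)

From HB Require Import structures.
From mathcomp Require Import all_boot all_order all_algebra.
Set Implicit Arguments. Unset Strict Implicit. Unset Printing Implicit Defensive.
Import GRing.Theory Num.Theory.
Local Open Scope ring_scope.

(* The (d+1)-dimensional Racah-algebra module R_d(a,b,c), realised on row
   vectors 'rV[F]_(d.+1): the basis vector v_i is the i-th unit row vector
   and a generator X acts by v |-> v *m X. *)
Section Racah.
Variable F : fieldType.
Variables (a b c : F) (d : nat).

Definition rhalf : F := d%:R / 2.

Definition rth (i : nat) : F := (a + rhalf - i%:R) * (a + rhalf - i%:R + 1).
Definition rths (i : nat) : F := (b + rhalf - i%:R) * (b + rhalf - i%:R + 1).
Definition rphi (i : nat) : F :=
  i%:R * (i%:R - d%:R - 1) * (a + b + c + rhalf - i%:R + 2)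
       * (a + b - c + rhalf - i%:R + 1).

Definition RA : 'M[F]_(d.+1) :=
  \matrix_(i, j) ((if j == i :> nat then rth i else 0)
                  + (if j == i.+1 :> nat then 1 else 0)).
Definition RB : 'M[F]_(d.+1) :=
  \matrix_(i, j) ((if j == i :> nat then rths i else 0)
                  + (if j.+1 == i :> nat then rphi i else 0)).

(* scalar by which delta = A + B + C acts *)
Definition rdelta : F :=
  rhalf * (rhalf + 1) + a * (a + 1) + b * (b + 1) + c * (c + 1).

Definition RC : 'M[F]_(d.+1) := rdelta%:M - RA - RB.
Definition RD : 'M[F]_(d.+1) := 2^-1 *: (RA *m RB - RB *m RA).

Definition racah_irreducible : Prop :=
  forall U : 'M[F]_(d.+1),
    stablemx U RA -> stablemx U RB -> stablemx U RC -> stablemx U RD ->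
    U = 0 \/ row_full U.
End Racah.

From HB Require Import structures.
From mathcomp Require Import all_boot all_order all_algebra.
From mathcomp Require Import ring zify.
Set Implicit Arguments. Unset Strict Implicit. Unset Printing Implicit Defensive.
Import GRing.Theory Num.Theory.
Local Open Scope ring_scope.

(* In the basis v_0, ..., v_d, A raises (v_i A = theta_i v_i + v_(i+1)) and B
   lowers (v_i B = theta*_i v_i + phi_i v_(i-1)).  A second basis of the same
   kind is w_k = v_0 prod_(l<k) (A - theta_l(-a-1)): as theta_l(-a-1) =
   theta_(d-l)(a), it uses the eigenvalues of A in reverse order, A raises it,
   and the cubic relation between A and B shows that B lowers it with the
   coefficients phi_i(-a-1).
   If some phi_j or phi_j(-a-1) with 1 <= j <= d vanishes, the basis vectors
   of index >= j in the corresponding basis span a proper submodule.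
   Otherwise a nonzero submodule contains a vector with nonzero v_0-coordinate
   (lower coordinates with B), hence w_d (apply prod_(l<d) (A - theta_l(-a-1)),
   which kills v_1, ..., v_d), hence w_0 = v_0 (lower with B), hence everything
   (raise with A).  Finally phi_i and phi_i(-a-1) factor into i, i-d-1 and two
   of the four linear forms of the statement, shifted by d/2 - i or
   d/2 - (d+1-i). *)

Section UnitRows.
Context {F : fieldType} {n : nat}.

Fact erow_key : unit. Proof. exact: tt. Qed.
(* Indexed by nat and 0 out of range, so families like e_(i+1), e_(i-1) need
   no bound checks. *)
Definition erow (j : nat) : 'rV[F]_n.+1 :=
  locked_with erow_key (\row_(l < n.+1) ((l == j :> nat)%:R)).
Definition ecol (j : nat) : 'cV[F]_n.+1 := (erow j)^T.

Lemma erowE j l : erow j 0 l = ((l : nat) == j)%:R.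
Proof. by rewrite /erow locked_withE mxE. Qed.

Lemma erow_out j : (n < j)%N -> erow j = 0.
Proof.
by move=> hj; apply/rowP => l; rewrite erowE mxE (ltn_eqF (leq_trans (ltn_ord l) hj)).
Qed.

Lemma erow_neq0 j : (j <= n)%N -> erow j != 0.
Proof.
move=> hj; apply/eqP => /rowP /(_ (Ordinal (hj : (j < n.+1)%N))).
by rewrite erowE mxE /= eqxx; apply/eqP; rewrite oner_eq0.
Qed.

Lemma erow_ord (k : 'I_n.+1) : erow k = delta_mx 0 k.
Proof. by apply/rowP => l; rewrite erowE !mxE eqxx. Qed.

Lemma erow_mul (M : 'M[F]_n.+1) i (hi : (i < n.+1)%N) : erow i *m M = row (Ordinal hi) M.
Proof. by rewrite (erow_ord (Ordinal hi)) -rowE. Qed.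

Lemma coord_ecol (x : 'rV[F]_n.+1) (i : 'I_n.+1) : (x *m ecol i) 0 0 = x 0 i.
Proof. by rewrite /ecol erow_ord trmx_delta -colE mxE. Qed.

Lemma row_sum_erow (u : 'rV[F]_n.+1) : u = \sum_(m < n.+1) u 0 m *: erow m.
Proof.
apply/rowP => l; rewrite summxE (bigD1 l) //= !mxE erowE eqxx mulr1 big1 ?addr0 // => m hm.
rewrite mxE erowE; have -> : ((l : nat) == m) = false by apply/negbTE; rewrite val_eqE eq_sym.
by rewrite mulr0.
Qed.

End UnitRows.

Section SplitFamilies.
Variables (F : fieldType) (n : nat).
Implicit Types (M U : 'M[F]_n.+1) (x : 'rV[F]_n.+1) (r : nat -> 'rV[F]_n.+1).

Definition raises M r (s : nat -> F) := forall k, r k *m M = s k *: r k + r k.+1.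
Definition lowers M r (t q : nat -> F) :=
  forall k, r k *m M = t k *: r k + q k *: r k.-1.

Lemma stable_submx_mul U M x : stablemx U M -> (x <= U)%MS -> (x *m M <= U)%MS.
Proof. by move=> sM hx; exact: submx_trans (submxMr M hx) sM. Qed.

Lemma raises_sub U M r s : raises M r s -> stablemx U M ->
  (r 0 <= U)%MS -> forall k, (r k <= U)%MS.
Proof.
move=> hr sM h0; elim=> // k IH.
have -> : r k.+1 = r k *m M - s k *: r k by rewrite hr addrC addKr.
by apply: addmx_sub; [exact: stable_submx_mul | rewrite -scaleNr scalemx_sub].
Qed.

Lemma lowers_sub U M r t q k : lowers M r t q -> stablemx U M ->
  (forall i, (1 <= i <= k)%N -> q i != 0) -> (r k <= U)%MS -> (r 0 <= U)%MS.
Proof.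
move=> hr sM; elim: k => // k IH hq hk; apply: IH => [i /andP[i1 ik]|].
  by apply: hq; rewrite i1 leqW.
have hqk : q k.+1 != 0 by apply: hq; rewrite leqnn.
have -> : r k = (q k.+1)^-1 *: (r k.+1 *m M - t k.+1 *: r k.+1).
  by rewrite hr /= addrAC subrr add0r scalerA mulVf ?scale1r.
rewrite scalemx_sub //; apply: addmx_sub; first exact: stable_submx_mul.
by rewrite -scaleNr scalemx_sub.
Qed.

(* q_j = 0 makes the span of r_j, ..., r_n stable under N. *)
Lemma lowers_raises_reducible M N r s t q j :
  raises M r s -> lowers N r t q -> (forall k, (n < k)%N -> r k = 0) ->
  r n != 0 -> q j = 0 -> (1 <= j <= n)%N ->
  exists U, [/\ stablemx U M, stablemx U N, U != 0 & ~~ row_full U].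
Proof.
move=> hM hN hout hnz hq /andP[hj1 hjn].
pose U : 'M[F]_n.+1 := \matrix_(k < n.+1) (if (j <= k)%N then r k else 0).
have memU k : (j <= k)%N -> (r k <= U)%MS.
  move=> hk; case: (ltnP n k) => hkn; first by rewrite hout // sub0mx.
  by apply: (eq_row_sub (Ordinal (hkn : (k < n.+1)%N))); rewrite rowK /= hk.
exists U; split.
- apply/row_subP => k; rewrite row_mul rowK; case: ifP => hk; last by rewrite mul0mx sub0mx.
  by rewrite hM addmx_sub ?scalemx_sub ?memU // leqW.
- apply/row_subP => k; rewrite row_mul rowK; case: ifP => hk; last by rewrite mul0mx sub0mx.
  rewrite hN; apply: addmx_sub; first by rewrite scalemx_sub ?memU.
  have [<-|hjk] := eqVneq j k; first by rewrite hq scale0r sub0mx.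
  by rewrite scalemx_sub // memU //; lia.
- apply/eqP => /(congr1 (row ord_max)); rewrite rowK row0 /= hjn.
  by apply/eqP.
- apply/negP => /row_fullP[X /mulmx1C /(congr1 (row 0))].
  rewrite row_mul rowK /= leqNgt hj1 mul0mx row1 => /rowP /(_ 0).
  by rewrite !mxE eqxx => /eqP; rewrite eq_sym oner_eq0.
Qed.

End SplitFamilies.

Section RacahModule.
Variables (F : fieldType) (a b c : F) (d : nat).
Local Notation A := (RA a d).
Local Notation B := (RB a b c d).

Lemma rphi0 a' : rphi a' b c d 0 = 0.
Proof. by rewrite /rphi !mul0r. Qed.

Lemma rphi_top : rphi a b c d d.+1 = 0.
Proof.
have top : ((d.+1)%:R - d%:R - 1 : F) = 0 by rewrite -addn1 natrD; ring.
by rewrite /rphi top mulr0 !mul0r.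
Qed.

Lemma erowA i : erow i *m A = rth a d i *: erow i + erow i.+1.
Proof.
case: (ltnP d i) => hi; first by rewrite (erow_out hi) (erow_out (leqW hi)) mul0mx scaler0 addr0.
rewrite (erow_mul _ hi); apply/rowP => l; rewrite !mxE !erowE /=.
by case: (_ == i); case: (_ == i.+1); rewrite ?mulr1n ?mulr0n ?mulr1 ?mulr0 ?addr0 ?add0r.
Qed.

Lemma erowB i : erow i *m B = rths b d i *: erow i + rphi a b c d i *: erow i.-1.
Proof.
case: (ltnP d i) => hi.
  rewrite (erow_out hi) mul0mx scaler0 add0r.
  have [->|hgt] := eqVneq i d.+1; first by rewrite rphi_top scale0r.
  by rewrite erow_out ?scaler0 //; lia.
rewrite (erow_mul _ hi); apply/rowP => l; rewrite !mxE !erowE /=.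
case: i hi => [|i] hi /=.
  by rewrite rphi0 mul0r addr0; case: (_ == 0); rewrite ?mulr1n ?mulr0n ?mulr1 ?mulr0 ?addr0.
rewrite eqSS; have [->|_] := eqVneq (l : nat) i.+1.
  by rewrite (gtn_eqF (ltnSn i)) /= mulr1n mulr0n mulr1 mulr0 !addr0.
by rewrite /= mulr0 !add0r; case: (_ == i); rewrite ?mulr1 ?mulr0.
Qed.

Lemma ecolB j : B *m ecol j = rths b d j *: ecol j + rphi a b c d j.+1 *: ecol j.+1.
Proof.
case: (ltnP d j) => hj.
  by rewrite /ecol (erow_out hj) (erow_out (leqW hj)) !trmx0 mulmx0 !scaler0 addr0.
rewrite /ecol [in LHS](erow_ord (Ordinal (hj : (j < d.+1)%N))) trmx_delta -colE; apply/colP => l.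
rewrite !mxE !erowE /=.
have [->|hlj] := eqVneq (l : nat) j.
  by rewrite (gtn_eqF (ltnSn j)) (ltn_eqF (ltnSn j)) /= mulr1 mulr0 !addr0.
rewrite /= mulr0 !add0r.
by have [<-|_] := eqVneq j.+1 (l : nat); rewrite ?eqxx /= ?mulr1 ?mulr0.
Qed.

Lemma stablemx_RC_RD (U : 'M[F]_d.+1) : stablemx U A -> stablemx U B ->
  stablemx U (RC a b c d) /\ stablemx U (RD a b c d).
Proof.
move=> sA sB; split.
  by rewrite /RC !stablemxD ?stablemxN ?stablemxC.
rewrite /RD -mul_scalar_mx stablemxM ?stablemxC //.
by rewrite stablemxD ?stablemxN ?stablemxM.
Qed.

Lemma racah_reducible (U : 'M[F]_d.+1) :
  stablemx U A -> stablemx U B -> U != 0 -> ~~ row_full U -> ~ racah_irreducible a b c d.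
Proof.
move=> sA sB /negPf U0 /negPf Uf irr; have [sC sD] := stablemx_RC_RD sA sB.
by case: (irr U sA sB sC sD) => [/eqP|]; rewrite ?U0 ?Uf.
Qed.

Definition ralpha : F :=
  (c - b) * (c + b + 1) * (a - rhalf F d) * (a + rhalf F d + 1).

Definition theta_poly (a' : F) k : {poly F} := \prod_(l < k) ('X - (rth a' d l)%:P).

Lemma horner_theta_polyS a' k : horner_mx A (theta_poly a' k.+1) =
  horner_mx A (theta_poly a' k) *m (A - (rth a' d k)%:M).
Proof.
by rewrite /theta_poly big_ord_recr rmorphM /= rmorphB /= horner_mx_X horner_mx_C.
Qed.

Lemma erow0_theta_poly k : erow 0 *m horner_mx A (theta_poly a k) = erow k.
Proof.
elim: k => [|k IH]; first by rewrite /theta_poly big_ord0 rmorph1 mulmx1.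
by rewrite horner_theta_polyS mulmxA IH mulmxBr erowA mul_mx_scalar addrC addKr.
Qed.

Fact wrow_key : unit. Proof. exact: tt. Qed.
Definition wrow k : 'rV[F]_d.+1 :=
  locked_with wrow_key (erow 0 *m horner_mx A (theta_poly (- a - 1) k)).

Lemma wrowE k : wrow k = erow 0 *m horner_mx A (theta_poly (- a - 1) k).
Proof. by rewrite /wrow locked_withE. Qed.

Lemma wrow0 : wrow 0 = erow 0.
Proof. by rewrite wrowE /theta_poly big_ord0 rmorph1 mulmx1. Qed.

Lemma wrowS k : wrow k.+1 = wrow k *m A - rth (- a - 1) d k *: wrow k.
Proof. by rewrite !wrowE horner_theta_polyS mulmxA mulmxBr mul_mx_scalar. Qed.

Lemma wrowA k : wrow k *m A = rth (- a - 1) d k *: wrow k + wrow k.+1.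
Proof. by rewrite wrowS addrC subrK. Qed.

Lemma mulmx_RA_coord (v : 'rV[F]_d.+1) (l : 'I_d.+1) :
  (v *m A) 0 l = v 0 l * rth a d l + (if (l : nat) is l'.+1 then v 0 (inord l') else 0).
Proof.
rewrite !mxE; under eq_bigr do rewrite !mxE mulrDr.
rewrite big_split /=; congr (_ + _).
  rewrite (bigD1 l) //= eqxx big1 ?addr0 // => m hm.
  have hm' : ((l:nat) == m) = false by apply/negbTE; rewrite val_eqE eq_sym.
  by rewrite hm' mulr0.
case: l => [[|l'] hl] /=; first by rewrite big1 // => m _; rewrite mulr0.
have hl' : (l' < d.+1)%N by apply: ltnW.
rewrite (bigD1 (inord l')) //= inordK // eqxx mulr1 big1 ?addr0 // => m hm.
have -> : (l'.+1 == (m:nat).+1) = false.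
  by apply/negbTE; rewrite eqSS; apply: contra hm => /eqP ->; rewrite inord_val.
by rewrite mulr0.
Qed.

Lemma wrow_coord k (l : 'I_d.+1) : (k <= d)%N -> (k <= l)%N ->
  wrow k 0 l = ((l : nat) == k)%:R.
Proof.
have coordB (u v : 'rV[F]_d.+1) x l' : (u - x *: v) 0 l' = u 0 l' - x * v 0 l'.
  by rewrite !mxE.
elim: k l => [l _ _|k IH l hk hl]; first by rewrite wrow0 erowE.
rewrite wrowS coordB mulmx_RA_coord !IH ?(ltnW hk) ?(ltnW hl) // (gtn_eqF hl).
rewrite mul0r add0r mulr0 subr0.
case: l hl => [[|l] hl] //= hkl.
by rewrite IH ?inordK // ltnW.
Qed.

Lemma wrow_neq0 : wrow d != 0.
Proof.
apply/eqP => /rowP /(_ ord_max); rewrite wrow_coord // mxE eqxx.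
by apply/eqP; rewrite oner_eq0.
Qed.

Hypothesis two_neq0 : (2%:R : F) != 0.

Lemma rth_opp_rev l : (l <= d)%N -> rth (- a - 1) d l = rth a d (d - l).
Proof. by move=> hl; rewrite /rth /rhalf natrB //; field. Qed.

Lemma theta_poly_opp_full : theta_poly (- a - 1) d.+1 = theta_poly a d.+1.
Proof.
rewrite /theta_poly (reindex_inj rev_ord_inj); apply: eq_bigr => l _.
by rewrite /= subSS rth_opp_rev ?leq_subr // subKn // -ltnS.
Qed.

Lemma wrow_out k : (d < k)%N -> wrow k = 0.
Proof.
elim: k => [//|k IH]; rewrite ltnS leq_eqVlt => /orP[/eqP <-|hk].
  by rewrite wrowE theta_poly_opp_full erow0_theta_poly erow_out.
by rewrite wrowS IH // mul0mx scaler0 subr0.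
Qed.

Lemma erow_theta_poly_opp m : (0 < m)%N ->
  erow m *m horner_mx A (theta_poly (- a - 1) d) = 0.
Proof.
case: m => [//|m] _.
have hornerM p q : horner_mx A (p * q) = horner_mx A p *m horner_mx A q := rmorphM _ p q.
rewrite -erow0_theta_poly -mulmxA -hornerM.
have -> : theta_poly a m.+1 * theta_poly (- a - 1) d =
    theta_poly (- a - 1) d.+1 * \prod_(i < m) ('X - (rth a d (lift ord0 i))%:P).
  rewrite /theta_poly big_ord_recl /= [LHS]mulrC mulrA; congr (_ * _).
  by rewrite [in RHS]big_ord_recr /= rth_opp_rev // subnn.
by rewrite hornerM mulmxA -wrowE wrow_out // mul0mx.
Qed.

(* The Racah relation for alpha, with C = delta - A - B and D = [A,B]/2
   substituted. *)
Local Ltac solve_entries :=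
  apply/rowP => l; rewrite !mxE /rth /rths /rphi /rdelta /ralpha /rhalf /=; field; done.

Lemma RA_RB_cubic :
  A *m A *m B - 2%:R *: (A *m B *m A) + B *m A *m A - 2%:R *: (A *m B) - 2%:R *: (B *m A)
  = 2%:R *: (A *m A) - (2%:R * rdelta a b c d) *: A + (2%:R * ralpha)%:M.
Proof.
apply/row_matrixP => k; rewrite !rowE -erow_ord.
rewrite !mulmxDr ?mulmxBr ?mulmxN -!scalemxAr !mulmxA mul_mx_scalar.
case: k => [[|k] hk] /=;
  do ![rewrite ?erowA ?erowB ?mulmxDl ?mulmxBl ?mulNmx -?scalemxAl]; solve_entries.
Qed.

Lemma wrowB i : wrow i *m B = rths b d i *: wrow i + rphi (- a - 1) b c d i *: wrow i.-1.
Proof.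
case: i => [|i]; first by rewrite wrow0 erowB !rphi0.
suff H : forall i,
    wrow i.+1 *m B = rths b d i.+1 *: wrow i.+1 + rphi (- a - 1) b c d i.+1 *: wrow i /\
    wrow i.+2 *m B = rths b d i.+2 *: wrow i.+2 + rphi (- a - 1) b c d i.+2 *: wrow i.+1.
  by case: (H i).
clear i; elim=> [|i [IH1 IH2]].
  split; rewrite !wrowS wrow0;
    do ![rewrite ?erowA ?erowB ?mulmxDl ?mulmxBl ?mulNmx -?scalemxAl];
    rewrite rphi0; solve_entries.
split=> //.
(* The cubic relation applied to w_(i+1) is linear in the unknown w_(i+3) B. *)
move: (congr1 (mulmx (wrow i.+1)) RA_RB_cubic).
rewrite !mulmxDr ?mulmxBr ?mulmxN -!scalemxAr !mulmxA mul_mx_scalar.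
do ![rewrite ?wrowA ?IH1 ?IH2 ?mulmxDl ?mulmxBl ?mulNmx -?scalemxAl].
move: (wrow i.+3 *m B) => Z /eqP; rewrite -subr_eq0 => /eqP E.
apply/eqP; rewrite -subr_eq0; apply/eqP; rewrite -E.
solve_entries.
Qed.

Section Irreducibility.
Variable U : 'M[F]_d.+1.
Hypotheses (sA : stablemx U A) (sB : stablemx U B).
Hypothesis phi_neq0 : forall i, (1 <= i <= d)%N -> rphi a b c d i != 0.

Lemma submod_shift_coord j (x : 'rV[F]_d.+1) : (j <= d)%N -> (x <= U)%MS ->
  exists2 u : 'rV_d.+1, (u <= U)%MS & u *m ecol 0 = x *m ecol j.
Proof.
elim: j x => [x _ hx|j IH x hj hx]; first by exists x.
have hp : rphi a b c d j.+1 != 0 by apply: phi_neq0; rewrite hj.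
pose y := (rphi a b c d j.+1)^-1 *: (x *m B - rths b d j *: x).
have hy : (y <= U)%MS.
  rewrite scalemx_sub // addmx_sub ?stable_submx_mul //.
  by rewrite -scaleNr scalemx_sub.
have [u hu uy] := IH y (ltnW hj) hy.
exists u => //; rewrite uy /y -scalemxAl mulmxBl -scalemxAl -mulmxA ecolB mulmxDr -!scalemxAr.
by rewrite addrAC subrr add0r scalerA mulVf ?scale1r.
Qed.

Lemma submod_coord0_neq0 : U != 0 -> exists2 u : 'rV_d.+1, (u <= U)%MS & u 0 0 != 0.
Proof.
case/matrix0Pn => k [l hl].
have hld : (l <= d)%N by rewrite -ltnS ltn_ord.
have [u hu] := submod_shift_coord hld (row_sub k U).
move/(congr1 (fun M : 'M_1 => M 0 0)); rewrite (coord_ecol u ord0) coord_ecol mxE => ul.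
by exists u; rewrite // ul.
Qed.

Lemma submod_wrow_top (u : 'rV_d.+1) : (u <= U)%MS -> u 0 0 != 0 -> (wrow d <= U)%MS.
Proof.
move=> hu u0.
have -> : wrow d = (u 0 0)^-1 *: (u *m horner_mx A (theta_poly (- a - 1) d)).
  rewrite {2}(row_sum_erow u) mulmx_suml big_ord_recl /= -scalemxAl -wrowE.
  rewrite big1 ?addr0 => [|m _]; first by rewrite scalerA mulVf ?scale1r.
  by rewrite -scalemxAl erow_theta_poly_opp ?scaler0.
by rewrite scalemx_sub // stable_submx_mul // horner_mx_stable.
Qed.

End Irreducibility.

Lemma racah_irreducible_of :
  (forall i, (1 <= i <= d)%N -> rphi a b c d i != 0) ->
  (forall i, (1 <= i <= d)%N -> rphi (- a - 1) b c d i != 0) ->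
  racah_irreducible a b c d.
Proof.
move=> phi_neq0 phi'_neq0 U sA sB _ _; have [->|Unz] := eqVneq U 0; [by left | right].
have [u hu u0] := submod_coord0_neq0 sB phi_neq0 Unz.
have e0 : (erow 0 <= U)%MS.
  by rewrite -wrow0; apply: lowers_sub wrowB sB phi'_neq0 (submod_wrow_top sA hu u0).
rewrite -sub1mx; apply/row_subP => k; rewrite row1 -erow_ord.
exact: raises_sub erowA sA e0 k.
Qed.

Lemma racah_irreducibleE : racah_irreducible a b c d <->
  (forall i, (1 <= i <= d)%N -> rphi a b c d i != 0 /\ rphi (- a - 1) b c d i != 0).
Proof.
split=> [irr i hi | H]; last by apply: racah_irreducible_of => i /H[].
split; apply/eqP => hq.
- have [U [sA sB Unz Unf]] :=
    lowers_raises_reducible erowA erowB erow_out (erow_neq0 (leqnn d)) hq hi.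
  exact: racah_reducible sA sB Unz Unf irr.
- have [U [sA sB Unz Unf]] :=
    lowers_raises_reducible wrowA wrowB wrow_out wrow_neq0 hq hi.
  exact: racah_reducible sA sB Unz Unf irr.
Qed.

Lemma rphi_factor i : (i <= d.+1)%N -> rphi a b c d i =
  i%:R * - (d.+1 - i)%:R * (a + b + c + 1 - (d%:R / 2 - (d.+1 - i)%:R))
                         * (a + b - c - (d%:R / 2 - (d.+1 - i)%:R)).
Proof. by move=> hi; rewrite /rphi /rhalf natrB // -addn1 natrD; field. Qed.

Lemma rphi_opp_factor i : (i <= d.+1)%N -> rphi (- a - 1) b c d i =
  i%:R * - (d.+1 - i)%:R * (- a + b + c - (d%:R / 2 - (d.+1 - i)%:R))
                         * - (a - b + c - (d%:R / 2 - i%:R)).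
Proof. by move=> hi; rewrite /rphi /rhalf natrB // -addn1 natrD; field. Qed.

Lemma rphi_neq0E :
  (forall i, (1 <= i <= d)%N -> rphi a b c d i != 0 /\ rphi (- a - 1) b c d i != 0) <->
  (forall k, (1 <= k <= d)%N -> k%:R != 0 :> F) /\
  (forall x, x \in [:: a + b + c + 1; - a + b + c; a - b + c; a + b - c] ->
     forall i, (1 <= i <= d)%N -> x != d%:R / 2 - i%:R).
Proof.
have mirror i : (1 <= i <= d)%N -> (1 <= d.+1 - i <= d)%N /\ (d.+1 - (d.+1 - i) = i)%N by lia.
have le_d1 i : (1 <= i <= d)%N -> (i <= d.+1)%N by lia.
split=> [H | [nat_neq0 x_neq] i hi].
  split=> [k /H[+ _] | x + i hi]; first by apply: contraNneq => k0; rewrite /rphi k0 !mul0r.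
  have [hj ji] := mirror i hi; have [phi_j phi'_j] := H _ hj; have [_ phi'_i] := H i hi.
  rewrite !inE => /or4P[]/eqP-> ; apply/eqP => hx.
  - by move: phi_j; rewrite rphi_factor ?le_d1 // ji hx subrr mulr0 mul0r eqxx.
  - by move: phi'_j; rewrite rphi_opp_factor ?le_d1 // ji hx subrr mulr0 mul0r eqxx.
  - by move: phi'_i; rewrite rphi_opp_factor ?le_d1 // hx subrr oppr0 mulr0 eqxx.
  - by move: phi_j; rewrite rphi_factor ?le_d1 // ji hx subrr mulr0 eqxx.
have [hj _] := mirror i hi.
have nz k : (1 <= k <= d)%N -> forall x, x \in [:: a + b + c + 1; - a + b + c; a - b + c; a + b - c] ->
  x - (d%:R / 2 - k%:R) != 0 by move=> hk x hx; rewrite subr_eq0 x_neq.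
rewrite rphi_factor ?rphi_opp_factor ?le_d1 //.
by rewrite !mulf_neq0 ?oppr_eq0 ?nat_neq0 ?nz // !inE eqxx ?orbT.
Qed.

End RacahModule.

Lemma pchar_gt_natf_neq0 (F : fieldType) d :
  ([pchar F] =i pred0 \/ (forall p, p \in [pchar F] -> (d < p)%N)) <->
  (forall k, (1 <= k <= d)%N -> k%:R != 0 :> F).
Proof.
split=> [[pchar0 | pchar_gt] k /andP[k_gt0 k_le] | natf_neq0].
- by rewrite ((pcharf0P F).1 pchar0 k) -lt0n.
- apply/negP => k0; have [p pchar_p] := natf0_pchar k_gt0 k0.
  have := pchar_gt p pchar_p; rewrite ltnNge => /negP; apply.
  by rewrite (leq_trans _ k_le) // dvdn_leq // (dvdn_pcharf pchar_p).
- right => p pchar_p; rewrite ltnNge; apply/negP => p_le.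
  have := natf_neq0 p; rewrite (pcharf0 pchar_p) eqxx prime_gt0 ?(pcharf_prime pchar_p) //.
  by move/(_ p_le).
Qed.

Theorem theorem4p5 (F : closedFieldType) (hF : ~ (2 \in [pchar F])%N)
    (a b c : F) (d : nat) :
  racah_irreducible a b c d <->
  ( ([pchar F] =i pred0 \/ (forall p : nat, p \in [pchar F] -> (d < p)%N))
    /\ (forall x : F, x \in [:: a + b + c + 1; - a + b + c; a - b + c; a + b - c] ->
          forall i : nat, (1 <= i <= d)%N -> x != d%:R / 2 - i%:R) ).
Proof.
have two_neq0 : (2%:R : F) != 0 by apply/negP => two0; apply: hF; rewrite inE /= two0.
by rewrite racah_irreducibleE // rphi_neq0E // pchar_gt_natf_neq0.
Qed.
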